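(* For every rpoNFA $\mathcal{A}$, the language $L(\mathcal{A})$ is DRE definable, i.e., there exists a deterministic regular expression $r$ with $L(r)=L(\mathcal{A})$.
   Context: A poNFA is an NFA whose reachability relation ($p\le q$ iff $q\in p\cdot w$ for some word $w$) is a partial order; an rpoNFA is a poNFA such that for every state $q$ and letter $a$, $q\in q\cdot a$ implies $q\cdot a=\{q\}$. Regular expressions over $\Sigma$ are built from $\emptyset$, $\varepsilon$, letters $a\in\Sigma$ by concatenation, union $+$ and Kleene star, with the usual semantics. For a regular expression $r$, let $\overline{r}$ be obtained by replacing the $i$-th occurrence of each letter $a$ in $r$ by a fresh marked letter $a_i$. The expression $r$ is deterministic (one-unambiguous) if there are no words $wa_iv$ and $wa_jv'$ in $L(\overline{r})$ with $i\neq j$. A regular language is DRE definable if some deterministic regular expression defines it. *)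

From Stdlib Require List.
From mathcomp Require Import all_boot.
Set Implicit Arguments. Unset Strict Implicit. Unset Printing Implicit Defensive.

Record nfa (Sigma Q : finType) := NFA {
  nfa_init  : {set Q};
  nfa_final : {set Q};
  nfa_delta : Q -> Sigma -> {set Q}
}.

Fixpoint delta_star (Sigma Q : finType) (A : nfa Sigma Q) (p : Q) (w : seq Sigma)
  : {set Q} :=
  match w with
  | [::] => [set p]
  | a :: w' => \bigcup_(q in nfa_delta A p a) delta_star A q w'
  end.

Definition reach (Sigma Q : finType) (A : nfa Sigma Q) (p q : Q) : Prop :=
  exists w : seq Sigma, q \in delta_star A p w.

(* the reachability relation is a partial order (reflexivity and
   transitivity hold automatically; we state all three) *)
Definition poNFA (Sigma Q : finType) (A : nfa Sigma Q) : Prop :=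
  (forall p, reach A p p) /\
  (forall p q r, reach A p q -> reach A q r -> reach A p r) /\
  (forall p q, reach A p q -> reach A q p -> p = q).

Definition rpoNFA (Sigma Q : finType) (A : nfa Sigma Q) : Prop :=
  poNFA A /\
  (forall (q : Q) (a : Sigma), q \in nfa_delta A q a -> nfa_delta A q a = [set q]).

Definition nfa_lang (Sigma Q : finType) (A : nfa Sigma Q) (w : seq Sigma) : Prop :=
  exists2 i, i \in nfa_init A & [exists q in delta_star A i w, q \in nfa_final A].

Inductive regex (T : Type) :=
| RE_Empty
| RE_Eps
| RE_Sym of T
| RE_Cat of regex T & regex T
| RE_Plus of regex T & regex T
| RE_Star of regex T.

Arguments RE_Empty {T}.
Arguments RE_Eps {T}.

Fixpoint re_lang (T : Type) (r : regex T) (w : seq T) : Prop :=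
  match r with
  | RE_Empty => False
  | RE_Eps => w = [::]
  | RE_Sym a => w = [:: a]
  | RE_Cat r1 r2 => exists u v, w = u ++ v /\ re_lang r1 u /\ re_lang r2 v
  | RE_Plus r1 r2 => re_lang r1 w \/ re_lang r2 w
  | RE_Star r1 => exists ws : seq (seq T),
                    w = flatten ws /\ List.Forall (re_lang r1) ws
  end.

(* Marking: the i-th occurrence (from the left, i >= 1) of each letter a
   is replaced by the marked letter (a, i). *)
Fixpoint mark_aux (T : eqType) (r : regex T) (c : T -> nat)
  : regex (T * nat) * (T -> nat) :=
  match r with
  | RE_Empty => (RE_Empty, c)
  | RE_Eps => (RE_Eps, c)
  | RE_Sym a => (RE_Sym (a, c a), fun b => if b == a then (c a).+1 else c b)
  | RE_Cat r1 r2 =>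
      let (m1, c1) := mark_aux r1 c in
      let (m2, c2) := mark_aux r2 c1 in (RE_Cat m1 m2, c2)
  | RE_Plus r1 r2 =>
      let (m1, c1) := mark_aux r1 c in
      let (m2, c2) := mark_aux r2 c1 in (RE_Plus m1 m2, c2)
  | RE_Star r1 =>
      let (m1, c1) := mark_aux r1 c in (RE_Star m1, c1)
  end.

Definition mark (T : eqType) (r : regex T) : regex (T * nat) :=
  (mark_aux r (fun _ => 1)).1.

Definition deterministic (T : eqType) (r : regex T) : Prop :=
  ~ exists (w v v' : seq (T * nat)) (a : T) (i j : nat),
      i <> j /\ re_lang (mark r) (w ++ (a, i) :: v)
             /\ re_lang (mark r) (w ++ (a, j) :: v').

Definition DRE_definable (T : eqType) (L : seq T -> Prop) : Prop :=
  exists r : regex T, deterministic r /\ forall w, re_lang r w <-> L w.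

From mathcomp Require Import all_boot.
From Stdlib Require Import ClassicalEpsilon.
Set Implicit Arguments. Unset Strict Implicit. Unset Printing Implicit Defensive.

(** Run the subset construction from the initial states.  In an rpoNFA a
    state q either has an a-self-loop, and then q.a = {q}, or all its
    a-successors lie strictly above it in the reachability order.  So a letter
    either fixes the current set X of states or replaces some states by states
    of larger height, which strictly decreases the weight
    sum_{x in X} (|Q|+1)^(|Q| - height x).  Hence
    the language from X is [(a_1 + ... + a_k)^* (eps? + b_1 E_1 + ... + b_m E_m)],
    where the a_i are the letters fixing X, eps is present iff X is accepting,
    the b_j are the remaining letters and E_j is the expression built in the
    same way for X . b_j, by well-founded recursion on the weight.  Since the
    a_i and the b_j are distinct letters, the next marked letter is always
    determined by the prefix read so far, so the expression is deterministic. *)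

Lemma cat_cons_eq_cat (S : Type) (w v u t : seq S) x :
  w ++ x :: v = u ++ t ->
  (exists v1, u = w ++ x :: v1) \/ (exists w1, w = u ++ w1 /\ t = w1 ++ x :: v).
Proof.
elim: w u => [|y w IH] [|z u] /=.
- by move=> <-; right; exists [::].
- by case=> -> ->; left; exists u.
- by move=> <-; right; exists (y :: w).
- case=> -> /IH [[v1 ->]|[w1 [-> ->]]]; first by left; exists v1.
  by right; exists w1.
Qed.

Lemma all_cat_cons_inj (S : Type) (P : pred S) (u1 u2 r1 r2 : seq S) x1 x2 :
  all P u1 -> all P u2 -> ~~ P x1 -> ~~ P x2 ->
  u1 ++ x1 :: r1 = u2 ++ x2 :: r2 -> [/\ u1 = u2, x1 = x2 & r1 = r2].
Proof.
elim: u1 u2 => [|y u1 IH] [|z u2] /=.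
- by move=> _ _ _ _ [-> ->].
- by move=> _ /andP [Pz _] nPx1 _ [Ez]; rewrite Ez Pz in nPx1.
- by move=> /andP [Py _] _ _ nPx2 [Ey]; rewrite -Ey Py in nPx2.
- move=> /andP [_ a1] /andP [_ a2] n1 n2 [-> E].
  by have [-> -> ->] := IH _ a1 a2 n1 n2 E.
Qed.

Section Weight.
Variable T : finType.

Definition weight (h : T -> nat) (X : {set T}) : nat :=
  \sum_(x in X) #|T|.+1 ^ (#|T| - h x).

Lemma weight_lt (h : T -> nat) (X Y : {set T}) m :
  (forall x, h x <= #|T|) -> m \in X :\: Y ->
  (forall y, y \in Y :\: X -> h m < h y) -> weight h Y < weight h X.
Proof.
move=> hT mXY hY; rewrite /weight (big_setID X) [X in _ < X](big_setID Y) /=.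
rewrite setIC ltn_add2l.
apply: (@leq_trans (#|T|.+1 ^ (#|T| - h m))); last by rewrite (bigD1 m) //= leq_addr.
have [->|[y0 y0YX]] := set_0Vmem (Y :\: X); first by rewrite big_set0 expn_gt0.
have hmT : h m < #|T| := leq_trans (hY _ y0YX) (hT y0).
rewrite -(subnSK hmT) expnS.
apply: (@leq_ltn_trans (\sum_(y in Y :\: X) #|T|.+1 ^ (#|T| - (h m).+1))).
  by apply: leq_sum => y /hY hy; rewrite leq_pexp2l // leq_sub2l.
by rewrite sum_nat_const ltn_mul2r expn_gt0 /= ltnS max_card.
Qed.

End Weight.

Section MarkedLayers.
Variable T : eqType.
Implicit Types (r : regex T) (c : T -> nat) (s bs : seq T).

Lemma mark_aux_cat r1 r2 c : mark_aux (RE_Cat r1 r2) c =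
  (RE_Cat (mark_aux r1 c).1 (mark_aux r2 (mark_aux r1 c).2).1,
   (mark_aux r2 (mark_aux r1 c).2).2).
Proof. by rewrite /=; case: (mark_aux r1 c) => m1 c1 /=; case: (mark_aux r2 c1). Qed.

Lemma mark_aux_plus r1 r2 c : mark_aux (RE_Plus r1 r2) c =
  (RE_Plus (mark_aux r1 c).1 (mark_aux r2 (mark_aux r1 c).2).1,
   (mark_aux r2 (mark_aux r1 c).2).2).
Proof. by rewrite /=; case: (mark_aux r1 c) => m1 c1 /=; case: (mark_aux r2 c1). Qed.

Lemma mark_aux_star r c : mark_aux (RE_Star r) c =
  (RE_Star (mark_aux r c).1, (mark_aux r c).2).
Proof. by rewrite /=; case: (mark_aux r c). Qed.

Fixpoint re_syms s : regex T :=
  if s is a :: s' then RE_Plus (RE_Sym a) (re_syms s') else RE_Empty.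

Fixpoint re_branches (F : T -> regex T) bs : regex T :=
  if bs is b :: bs' then RE_Plus (RE_Cat (RE_Sym b) (F b)) (re_branches F bs')
  else RE_Empty.

Definition re_layer s (fin : bool) (F : T -> regex T) bs : regex T :=
  RE_Cat (RE_Star (re_syms s))
         (RE_Plus (if fin then RE_Eps else RE_Empty) (re_branches F bs)).

Lemma re_syms_lang s w : re_lang (re_syms s) w <-> exists2 a, a \in s & w = [:: a].
Proof.
elim: s w => [|a s IH] w /=; first by split => // [[]].
split => [[->|/IH [b bs ->]]|[b]].
- by exists a; rewrite ?inE ?eqxx.
- by exists b; rewrite ?inE ?bs ?orbT.
- rewrite inE => /orP [/eqP ->|bs] ->; [by left | right; apply/IH; by exists b].
Qed.

Lemma re_star_syms_lang s u : re_lang (RE_Star (re_syms s)) u <-> all (mem s) u.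
Proof.
split.
  move=> [ws [-> H]]; elim: H => //= w ws' Hw _ IH.
  by case/re_syms_lang: Hw => a Ha ->; rewrite /= Ha IH.
move=> Hu; exists (map (fun x => [:: x]) u); split.
  by elim: u {Hu} => //= x u {1}->.
elim: u Hu => //= x u IH /andP [xs us]; constructor; last exact: IH.
by apply/re_syms_lang; exists x.
Qed.

Lemma re_branches_lang F bs w : re_lang (re_branches F bs) w <->
  exists b t, [/\ b \in bs, w = b :: t & re_lang (F b) t].
Proof.
elim: bs w => [|a bs IH] w /=; first by split => // [[b [t []]]].
split.
  case=> [[u [t [-> [-> Ht]]]]|/IH [b [t [Hb -> Ht]]]].
    by exists a, t; rewrite inE eqxx.
  by exists b, t; rewrite inE Hb orbT.
case=> b [t [Hb -> Ht]]; rewrite inE in Hb; case/orP: Hb => [/eqP Eb|Hb].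
  by subst b; left; exists [:: a], t.
by right; apply/IH; exists b, t.
Qed.

Definition det_lang (L : seq (T * nat) -> Prop) : Prop :=
  forall w v v' a i j, L (w ++ (a, i) :: v) -> L (w ++ (a, j) :: v') -> i = j.

Lemma deterministicP r : det_lang (re_lang (mark r)) -> deterministic r.
Proof.
by move=> detr [w [v [v' [a [i [j [nij [H1 H2]]]]]]]]; exact/nij/(detr _ _ _ _ _ _ H1 H2).
Qed.

(* In a marked layer the mark of a letter is determined by the letter alone:
   [g] for the loop letters in [s], [g'] for the exit letters. *)
Definition layer_shape s (g g' : T -> nat) (Lb : T -> seq (T * nat) -> Prop)
    (z : seq (T * nat)) : Prop :=
  exists u t, [/\ z = u ++ t, all (fun x => (x.1 \in s) && (x.2 == g x.1)) u &
    t = [::] \/ exists b t', [/\ b \notin s, t = (b, g' b) :: t' & Lb b t']].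

Lemma layer_shape_cases s g g' Lb w a i v :
  layer_shape s g g' Lb (w ++ (a, i) :: v) ->
  [\/ [/\ all (fun x => x.1 \in s) w, a \in s & i = g a],
      [/\ all (fun x => x.1 \in s) w, a \notin s & i = g' a] |
      exists u b w1, [/\ all (fun x => x.1 \in s) u, b \notin s,
                         w = u ++ (b, g' b) :: w1 & Lb b (w1 ++ (a, i) :: v)]].
Proof.
have loop_letters u : all (fun x => (x.1 \in s) && (x.2 == g x.1)) u ->
    all (fun x => x.1 \in s) u.
  by apply: sub_all => x /andP [].
case=> u [t [E Au Ht]]; case: (cat_cons_eq_cat E) => [[v1 Eu]|[w1 [Ew Et]]].
  move: Au; rewrite Eu all_cat /= => /and3P [Aw /andP [Ha /eqP Hi] _].
  by apply: Or31; split => //; exact: loop_letters.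
case: Ht => [Et0|[b [t' [nbs Et' Ht']]]]; first by rewrite Et0 in Et; case: w1 Ew Et.
move: Et'; rewrite Et {Et}; case: w1 Ew => [|y w1] Ew /= [].
  move=> Eab Ei _; subst b i; rewrite cats0 in Ew; subst w.
  by apply: Or32; split => //; exact: loop_letters.
move=> Ey Et'; apply: Or33; exists u, b, w1; split => //; first exact: loop_letters.
- by rewrite Ew Ey.
- by rewrite Et'.
Qed.

Lemma det_layer s g g' Lb L :
  (forall b, det_lang (Lb b)) -> (forall z, L z -> layer_shape s g g' Lb z) ->
  det_lang L.
Proof.
move=> detLb shapeL w v v' a i j /shapeL H1 /shapeL H2.
have exit_in_prefix u b w1 : b \notin s ->
    ~~ all (fun x => x.1 \in s) (u ++ (b, g' b) :: w1).
  by move=> nbs; rewrite all_cat /= (negbTE nbs) andbF.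
case: (layer_shape_cases H1) => [[Aw Ha ->]|[Aw Ha ->]|[u1 [b1 [w1 [Au1 nb1 Ew Hr1]]]]];
case: (layer_shape_cases H2) => [[Aw' Ha' ->]|[Aw' Ha' ->]|[u2 [b2 [w2 [Au2 nb2 Ew' Hr2]]]]] //.
- by rewrite Ha in Ha'.
- by move: Aw; rewrite Ew' (negbTE (exit_in_prefix _ _ _ nb2)).
- by rewrite Ha' in Ha.
- by move: Aw; rewrite Ew' (negbTE (exit_in_prefix _ _ _ nb2)).
- by move: Aw'; rewrite Ew (negbTE (exit_in_prefix _ _ _ nb1)).
- by move: Aw'; rewrite Ew (negbTE (exit_in_prefix _ _ _ nb1)).
- rewrite Ew in Ew'.
  have [_ [Eb _] Ew12] :=
    all_cat_cons_inj (x1 := (b1, g' b1)) (x2 := (b2, g' b2)) Au1 Au2 nb1 nb2 Ew'.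
  subst b2 w2.
  exact: detLb Hr1 Hr2.
Qed.

Lemma mark_syms s c : uniq s -> exists g : T -> nat, forall z,
  re_lang (mark_aux (re_syms s) c).1 z -> exists2 a, a \in s & z = [:: (a, g a)].
Proof.
elim: s c => [|a s IH] c; first by move=> _; exists (fun _ => 0) => z /= [].
case/andP => nas us; rewrite [re_syms _]/= mark_aux_plus.
have [g' Hg'] := IH (mark_aux (RE_Sym a) c).2 us.
exists (fun x => if x == a then c a else g' x) => z /= [->|/Hg' [a' Ha' ->]].
  by exists a; rewrite ?inE ?eqxx.
exists a'; first by rewrite inE Ha' orbT.
by have /negbTE -> : a' != a by apply: contraNneq nas => <-.
Qed.

Lemma mark_star_syms s c : uniq s -> exists g : T -> nat, forall z,
  re_lang (RE_Star (mark_aux (re_syms s) c).1) z ->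
  all (fun x => (x.1 \in s) && (x.2 == g x.1)) z.
Proof.
move=> us; have [g Hg] := mark_syms c us; exists g => _ [ws [-> Hws]].
elim: Hws => //= w ws' /Hg [a Ha ->] _ IH.
by rewrite /= Ha eqxx IH.
Qed.

Lemma mark_branches F bs c : uniq bs ->
  exists (g : T -> nat) (h : T -> regex (T * nat)),
  (forall b, exists c', h b = (mark_aux (F b) c').1) /\
  forall z, re_lang (mark_aux (re_branches F bs) c).1 z ->
    exists b t, [/\ b \in bs, z = (b, g b) :: t & re_lang (h b) t].
Proof.
elim: bs c => [|a s IH] c.
  move=> _; exists (fun _ => 0), (fun b => (mark_aux (F b) c).1).
  by split => [b|z [] //]; exists c.
case/andP => nas us; rewrite [re_branches _ _]/= mark_aux_plus mark_aux_cat.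
set ca := (mark_aux (RE_Sym a) c).2.
have [g' [h' [Hh' Hg']]] := IH (mark_aux (F a) ca).2 us.
exists (fun x => if x == a then c a else g' x).
exists (fun x => if x == a then (mark_aux (F a) ca).1 else h' x).
split => [b|z /= [[u [t [-> [-> Ht]]]]|/Hg' [b [t [Hb -> Ht]]]]].
- by case: eqP => [-> | _]; [exists ca | exact: Hh'].
- by exists a, t; rewrite inE eqxx.
- have /negbTE nba : b != a by apply: contraNneq nas => <-.
  by exists b, t; rewrite inE Hb orbT nba.
Qed.

Lemma det_mark_layer s fin F bs c :
  uniq s -> uniq bs -> (forall b, b \in bs -> b \notin s) ->
  (forall b c', det_lang (re_lang (mark_aux (F b) c').1)) ->
  det_lang (re_lang (mark_aux (re_layer s fin F bs) c).1).
Proof.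
move=> us ubs dis detF.
rewrite /re_layer mark_aux_cat mark_aux_star mark_aux_plus.
have [g Hg] := mark_star_syms c us.
have [g' [h [Hh Hb]]] := mark_branches F
  (mark_aux (if fin then RE_Eps else RE_Empty) (mark_aux (re_syms s) c).2).2 ubs.
apply: (@det_layer s g g' (fun b => re_lang (h b))).
  by move=> b; have [c' ->] := Hh b; exact: detF.
move=> z /= [u [t [-> [/Hg Hu Ht]]]]; exists u, t; split => //.
case: Ht => [|/Hb [b [t' [bbs -> Ht']]]]; first by case: (fin) => [/= ->|[]]; left.
by right; exists b, t'; split => //; exact: dis.
Qed.

End MarkedLayers.

Section SubsetAutomaton.
Variables (Sigma Q : finType) (A : nfa Sigma Q).

Definition step_set (X : {set Q}) (a : Sigma) : {set Q} :=
  \bigcup_(p in X) nfa_delta A p a.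

Definition delta_set (X : {set Q}) (w : seq Sigma) : {set Q} := foldl step_set X w.

Definition accepting (X : {set Q}) : bool := [exists q in X, q \in nfa_final A].

Lemma mem_delta_set w X x :
  (x \in delta_set X w) = [exists p in X, x \in delta_star A p w].
Proof.
elim: w X => [|a w IH] X /=.
  apply/idP/existsP => [xX|[p /andP [pX]]]; first by exists x; rewrite xX inE eqxx.
  by rewrite inE => /eqP ->.
rewrite IH; apply/existsP/existsP.
  case=> q /andP [/bigcupP [p pX qp] xq].
  by exists p; rewrite pX /=; apply/bigcupP; exists q.
case=> p /andP [pX /bigcupP [q qp xq]].
by exists q; rewrite xq andbT; apply/bigcupP; exists p.
Qed.

Lemma nfa_langE w : nfa_lang A w <-> accepting (delta_set (nfa_init A) w).
Proof.
split.
  case=> i iI /existsP [q /andP [qd qf]]; apply/existsP; exists q.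
  by rewrite qf andbT mem_delta_set; apply/existsP; exists i; rewrite iI.
case/existsP => q /andP []; rewrite mem_delta_set => /existsP [i /andP [iI qd]] qf.
by exists i => //; apply/existsP; exists q; rewrite qd.
Qed.

Definition loop_letters (X : {set Q}) : seq Sigma :=
  [seq a <- enum Sigma | step_set X a == X].

Definition exit_letters (X : {set Q}) : seq Sigma :=
  [seq a <- enum Sigma | step_set X a != X].

(* [n] is fuel; it suffices that [n] exceeds the weight of [X]. *)
Fixpoint set_re (n : nat) (X : {set Q}) : regex Sigma :=
  if n is n'.+1 then
    re_layer (loop_letters X) (accepting X) (fun b => set_re n' (step_set X b))
             (exit_letters X)
  else RE_Empty.

Lemma det_set_re n X c : det_lang (re_lang (mark_aux (set_re n X) c).1).
Proof.
elim: n X c => [|n IH] X c; first by move=> w v v' a i j /= [].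
apply: det_mark_layer => [||b|b c'].
- exact: filter_uniq (enum_uniq _).
- exact: filter_uniq (enum_uniq _).
- by rewrite !mem_filter negb_and => /andP [-> _].
- exact: IH.
Qed.

Definition reachb (p q : Q) : bool := excluded_middle_informative (reach A p q).

Lemma reachbP p q : reflect (reach A p q) (reachb p q).
Proof. by rewrite /reachb; case: excluded_middle_informative => H; constructor. Qed.

Definition height (q : Q) : nat := #|[set p | reachb p q]|.

Lemma reach_step p a q : q \in nfa_delta A p a -> reach A p q.
Proof. by move=> qpa; exists [:: a] => /=; apply/bigcupP; exists q; rewrite ?inE. Qed.

Section Rpo.
Hypothesis rpoA : rpoNFA A.

Lemma height_lt p q : reach A p q -> p != q -> height p < height q.
Proof.
have [[refl [trans anti]] _] := rpoA.
move=> pq npq; apply/proper_card/properP; split.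
  by apply/subsetP => x; rewrite !inE => /reachbP xp; apply/reachbP; exact: trans pq.
exists q; rewrite !inE; first exact/reachbP.
by apply/reachbP => qp; rewrite (anti _ _ pq qp) eqxx in npq.
Qed.

Lemma height_step_lt q a y :
  q \notin nfa_delta A q a -> y \in nfa_delta A q a -> height q < height y.
Proof.
move=> nloop yqa; apply: height_lt; first exact: reach_step yqa.
by apply: contraNneq nloop => Eqy; rewrite {1}Eqy.
Qed.

(* Following a state of [X] backwards along [a]-transitions without
   self-loops strictly decreases the height, so it ends in [X :\: X.a]. *)
Lemma step_set_descend (X : {set Q}) a q : q \in X -> q \notin nfa_delta A q a ->
  exists2 r, r \in X :\: step_set X a & height r <= height q.
Proof.
have [_ self_loop] := rpoA.
have [n] := ubnP (height q); elim: n q => // n IH q hqn qX nloop.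
have [qY|qnY] := boolP (q \in step_set X a); last by exists q; rewrite ?inE ?qnY.
case/bigcupP: qY => p pX qpa.
have [ploop|nploop] := boolP (p \in nfa_delta A p a).
  by move: qpa nloop; rewrite (self_loop _ _ ploop) inE => /eqP ->; rewrite ploop.
have hpq := height_step_lt nploop qpa.
have [r rXY hrp] := IH p (leq_trans hpq hqn) pX nploop.
by exists r => //; exact: leq_trans hrp (ltnW hpq).
Qed.

Lemma step_set_new (X : {set Q}) a y : y \in step_set X a -> y \notin X ->
  exists2 r, r \in X :\: step_set X a & height r < height y.
Proof.
have [_ self_loop] := rpoA.
case/bigcupP => q qX yqa ynX.
have [qloop|nqloop] := boolP (q \in nfa_delta A q a).
  by move: yqa; rewrite (self_loop _ _ qloop) inE => /eqP Eyq; rewrite Eyq qX in ynX.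
have [r rXY hrq] := step_set_descend qX nqloop.
by exists r => //; exact: leq_ltn_trans hrq (height_step_lt nqloop yqa).
Qed.

Lemma weight_step_lt (X : {set Q}) a :
  step_set X a != X -> weight height (step_set X a) < weight height X.
Proof.
set Y := step_set X a => neqXY.
have [x0 x0XY] : exists x0, x0 \in X :\: Y.
  have [XY|/subsetPn [x xX xnY]] := boolP (X \subset Y); last first.
    by exists x; rewrite inE xnY xX.
  have /subsetPn [y yY ynX] : ~~ (Y \subset X).
    by apply: contra neqXY => YX; rewrite eqEsubset YX.
  by have [r rXY _] := step_set_new yY ynX; exists r.
case: (@arg_minnP _ x0 (mem (X :\: Y)) height x0XY) => m mXY minm.
apply: (weight_lt (m := m)) => // [x|y]; first exact: max_card.
rewrite inE => /andP [ynX yY].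
by have [r rXY hry] := step_set_new yY ynX; exact: leq_ltn_trans (minm _ rXY) hry.
Qed.

Lemma set_re_lang n (X : {set Q}) w :
  weight height X < n -> re_lang (set_re n X) w <-> accepting (delta_set X w).
Proof.
elim: n X w => // n IH X w wXn.
have exit_lt b : b \in exit_letters X -> weight height (step_set X b) < n.
  by rewrite mem_filter => /andP [nb _]; exact: leq_trans (weight_step_lt nb) wXn.
have delta_loops u : all (mem (loop_letters X)) u -> delta_set X u = X.
  elim: u => //= a u IHu /andP []; rewrite /= mem_filter => /andP [/eqP -> _].
  exact: IHu.
split.
  move=> [u [t [-> [/re_star_syms_lang Hu Ht]]]].
  rewrite /delta_set foldl_cat -/(delta_set X u) delta_loops //.
  case: Ht => [|/re_branches_lang [b [t' [Hb -> Ht']]]].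
    by case: ifP => //= accX ->.
  exact/(IH _ _ (exit_lt _ Hb)).
elim: w => [|a w IHw] Hw.
  exists [::], [::]; split => //; split; first exact/re_star_syms_lang.
  by left; move: Hw => /= ->.
have [aloop|naloop] := boolP (a \in loop_letters X).
  have Ea : step_set X a = X by move: aloop; rewrite mem_filter => /andP [/eqP].
  move: Hw; rewrite /delta_set /= Ea => /IHw [u [t [-> [Hu Ht]]]].
  exists (a :: u), t; split => //; split => //.
  by apply/re_star_syms_lang; rewrite /= aloop; exact/re_star_syms_lang.
have aexit : a \in exit_letters X.
  by rewrite mem_filter mem_enum andbT; move: naloop; rewrite mem_filter mem_enum andbT.
exists [::], (a :: w); split => //; split; first exact/re_star_syms_lang.
right; apply/re_branches_lang; exists a, w; split => //.
exact/(IH _ _ (exit_lt _ aexit)).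
Qed.

End Rpo.

End SubsetAutomaton.

Theorem theorem12 (Sigma Q : finType) (A : nfa Sigma Q) :
  rpoNFA A -> DRE_definable (nfa_lang A).
Proof.
move=> rpoA; set I := nfa_init A.
exists (set_re A (weight (height A) I).+1 I); split.
  exact/deterministicP/det_set_re.
by move=> w; rewrite nfa_langE; exact: set_re_lang.
Qed.
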